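(* Let $k\geq 0$ be fixed and consider the one-parameter family of maps $f(x,r)=x^2\exp(r-x)+k$ with bifurcation parameter $r\in\mathbb{R}$. Let \[ x_0=\frac{k+3+\sqrt{k^2-2k+9}}{2},\qquad r_0=x_0-\ln\big(x_0(x_0-2)\big)\quad\Big(\text{equivalently } r_0=x_0+\ln\big((x_0-k)/x_0^2\big)\Big). \] Then $x_0$ is a fixed point of $f(\cdot,r_0)$ and the family undergoes a supercritical flip bifurcation at the fixed point $x_0$ for the bifurcation value $r=r_0$.
   Context: For a smooth one-parameter family $x\mapsto f(x,a)$ of maps of $\mathbb{R}$ with a fixed point $x_0$ at $a=a_0$, one says that a flip (period-doubling) bifurcation occurs at $x_0$ for $a=a_0$ if $\frac{\partial f}{\partial x}(x_0,a_0)=-1$ and the nondegeneracy conditions (B.1) $\mathcal{Q}f(x_0,a_0):=\frac12\big(\frac{\partial^2 f}{\partial x^2}(x_0,a_0)\big)^2+\frac13\frac{\partial^3 f}{\partial x^3}(x_0,a_0)\neq 0$ and (B.2) $\frac{\partial^2 f}{\partial x\partial a}(x_0,a_0)\neq0$ hold; then smooth invertible changes of coordinates and parameter transform the system into $\eta\mapsto-(1+\beta)\eta\pm\eta^3+O(\eta^4)$. The flip bifurcation is called supercritical if $\mathcal{Q}f(x_0,a_0)>0$ (the fixed point loses stability and a stable period-2 orbit emerges). *)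

From Stdlib Require Import Reals.
From Coquelicot Require Import Coquelicot.
Open Scope R_scope.

Definition dfx (f : R -> R -> R) (x0 a0 : R) : R :=
  Derive (fun x => f x a0) x0.
Definition dfxx (f : R -> R -> R) (x0 a0 : R) : R :=
  Derive_n (fun x => f x a0) 2 x0.
Definition dfxxx (f : R -> R -> R) (x0 a0 : R) : R :=
  Derive_n (fun x => f x a0) 3 x0.
Definition dfxa (f : R -> R -> R) (x0 a0 : R) : R :=
  Derive (fun a => Derive (fun x => f x a) x0) a0.

Definition Qf (f : R -> R -> R) (x0 a0 : R) : R :=
  / 2 * (dfxx f x0 a0) ^ 2 + / 3 * dfxxx f x0 a0.

Definition flip_bifurcation (f : R -> R -> R) (x0 a0 : R) : Prop :=
  f x0 a0 = x0 /\
  (forall n, (n <= 3)%nat -> ex_derive_n (fun x => f x a0) n x0) /\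
  ex_derive (fun a => Derive (fun x => f x a) x0) a0 /\
  dfx f x0 a0 = -1 /\
  Qf f x0 a0 <> 0 /\
  dfxa f x0 a0 <> 0.

Definition supercritical_flip (f : R -> R -> R) (x0 a0 : R) : Prop :=
  flip_bifurcation f x0 a0 /\ Qf f x0 a0 > 0.

From Stdlib Require Import Reals Lra Psatz.
From Coquelicot Require Import Coquelicot.
Open Scope R_scope.

(* Every x-derivative of x^2 e^(r-x) + k is a polynomial times e^(r-x), and
   d/dr leaves e^(r-x) unchanged, so f_xr = f_x.  For any x > 2, the parameter
   r = x - ln(x(x-2)) makes e^(r-x) = 1/(x(x-2)), hence
   f_x = (2x - x^2)/(x(x-2)) = -1 = f_xr and Q = ((x-2)^4 + 8x - 4) / (6 (x(x-2))^2) > 0.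
   The point x is then fixed exactly when x/(x-2) + k = x, i.e.
   x^2 - (k+3)x + 2k = 0, whose larger root is x0. *)

Section SquareExpMap.

Variable k : R.

Definition sq_exp_map (x r : R) : R := x ^ 2 * exp (r - x) + k.

Definition sq_exp_map_dx (r x : R) : R := (2 * x - x ^ 2) * exp (r - x).
Definition sq_exp_map_dxx (r x : R) : R := (x ^ 2 - 4 * x + 2) * exp (r - x).
Definition sq_exp_map_dxxx (r x : R) : R := (- x ^ 2 + 6 * x - 6) * exp (r - x).

Lemma is_derive_sq_exp_map (r x : R) :
  is_derive (fun y => sq_exp_map y r) x (sq_exp_map_dx r x).
Proof. unfold sq_exp_map, sq_exp_map_dx; auto_derive; [auto | unfold Rminus; ring]. Qed.

Lemma is_derive_sq_exp_map_dx (r x : R) :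
  is_derive (sq_exp_map_dx r) x (sq_exp_map_dxx r x).
Proof. unfold sq_exp_map_dx, sq_exp_map_dxx; auto_derive; [auto | unfold Rminus; ring]. Qed.

Lemma is_derive_sq_exp_map_dxx (r x : R) :
  is_derive (sq_exp_map_dxx r) x (sq_exp_map_dxxx r x).
Proof. unfold sq_exp_map_dxx, sq_exp_map_dxxx; auto_derive; [auto | unfold Rminus; ring]. Qed.

Lemma is_derive_sq_exp_map_dx_param (r x : R) :
  is_derive (fun a => sq_exp_map_dx a x) r (sq_exp_map_dx r x).
Proof. unfold sq_exp_map_dx; auto_derive; [auto | unfold Rminus; ring]. Qed.

Lemma Derive_sq_exp_map (r x : R) :
  Derive (fun y => sq_exp_map y r) x = sq_exp_map_dx r x.
Proof. apply is_derive_unique, is_derive_sq_exp_map. Qed.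

Lemma Derive_n2_sq_exp_map (r x : R) :
  Derive_n (fun y => sq_exp_map y r) 2 x = sq_exp_map_dxx r x.
Proof.
  simpl; rewrite (Derive_ext _ (sq_exp_map_dx r)) by apply Derive_sq_exp_map.
  apply is_derive_unique, is_derive_sq_exp_map_dx.
Qed.

Lemma Derive_n3_sq_exp_map (r x : R) :
  Derive_n (fun y => sq_exp_map y r) 3 x = sq_exp_map_dxxx r x.
Proof.
  change (Derive (Derive_n (fun y => sq_exp_map y r) 2) x = sq_exp_map_dxxx r x).
  rewrite (Derive_ext _ (sq_exp_map_dxx r)) by apply Derive_n2_sq_exp_map.
  apply is_derive_unique, is_derive_sq_exp_map_dxx.
Qed.

Lemma ex_derive_n_sq_exp_map (r x : R) (n : nat) :
  (n <= 3)%nat -> ex_derive_n (fun y => sq_exp_map y r) n x.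
Proof.
  intros Hn; destruct n as [| [| [| [| n]]]]; try lia; simpl; [exact I | | |].
  - exists (sq_exp_map_dx r x); apply is_derive_sq_exp_map.
  - exists (sq_exp_map_dxx r x).
    apply (is_derive_ext (sq_exp_map_dx r)); [| apply is_derive_sq_exp_map_dx].
    intros y; symmetry; apply Derive_sq_exp_map.
  - exists (sq_exp_map_dxxx r x).
    apply (is_derive_ext (sq_exp_map_dxx r)); [| apply is_derive_sq_exp_map_dxx].
    intros y; symmetry; apply Derive_n2_sq_exp_map.
Qed.

Lemma is_derive_Derive_sq_exp_map_param (r x : R) :
  is_derive (fun a => Derive (fun y => sq_exp_map y a) x) r (sq_exp_map_dx r x).
Proof.
  apply (is_derive_ext (fun a => sq_exp_map_dx a x));
    [| apply is_derive_sq_exp_map_dx_param].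
  intros a; symmetry; apply Derive_sq_exp_map.
Qed.

Definition flip_parameter (x : R) : R := x - ln (x * (x - 2)).

Lemma exp_flip_parameter (x : R) :
  2 < x -> exp (flip_parameter x - x) = / (x * (x - 2)).
Proof.
  intros Hx; unfold flip_parameter.
  replace (x - ln (x * (x - 2)) - x) with (- ln (x * (x - 2))) by ring.
  rewrite exp_Ropp, exp_ln; [reflexivity | nra].
Qed.

Lemma sq_exp_map_dx_flip (x : R) :
  2 < x -> sq_exp_map_dx (flip_parameter x) x = -1.
Proof.
  intros Hx; unfold sq_exp_map_dx; rewrite exp_flip_parameter by exact Hx.
  field; lra.
Qed.

Lemma dfx_sq_exp_map_flip (x : R) :
  2 < x -> dfx sq_exp_map x (flip_parameter x) = -1.
Proof. intros Hx; unfold dfx; rewrite Derive_sq_exp_map; apply sq_exp_map_dx_flip, Hx. Qed.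

Lemma dfxa_sq_exp_map_flip (x : R) :
  2 < x -> dfxa sq_exp_map x (flip_parameter x) = -1.
Proof.
  intros Hx; unfold dfxa.
  rewrite (is_derive_unique _ _ _ (is_derive_Derive_sq_exp_map_param _ x)).
  apply sq_exp_map_dx_flip, Hx.
Qed.

Lemma Qf_sq_exp_map_flip (x : R) :
  2 < x ->
  Qf sq_exp_map x (flip_parameter x) =
  ((x - 2) ^ 4 + 8 * x - 4) / (6 * (x * (x - 2)) ^ 2).
Proof.
  intros Hx; unfold Qf, dfxx, dfxxx.
  rewrite Derive_n2_sq_exp_map, Derive_n3_sq_exp_map.
  unfold sq_exp_map_dxx, sq_exp_map_dxxx; rewrite exp_flip_parameter by exact Hx.
  field; lra.
Qed.

Lemma Qf_sq_exp_map_flip_pos (x : R) :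
  2 < x -> Qf sq_exp_map x (flip_parameter x) > 0.
Proof.
  intros Hx; rewrite Qf_sq_exp_map_flip by exact Hx.
  assert (Hnum : 0 < (x - 2) ^ 4 + 8 * x - 4) by (pose proof (pow_le (x - 2) 4); lra).
  apply Rdiv_lt_0_compat; [exact Hnum |].
  apply Rmult_lt_0_compat; [lra | apply pow_lt; nra].
Qed.

Lemma sq_exp_map_flip_fixed (x : R) :
  2 < x -> (x - k) * (x - 2) = x -> sq_exp_map x (flip_parameter x) = x.
Proof.
  intros Hx Hq; unfold sq_exp_map; rewrite exp_flip_parameter by exact Hx.
  replace (x ^ 2) with ((x - k) * (x * (x - 2))) by nra.
  field; lra.
Qed.

Lemma supercritical_flip_sq_exp_map (x : R) :
  2 < x -> (x - k) * (x - 2) = x ->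
  supercritical_flip sq_exp_map x (flip_parameter x).
Proof.
  intros Hx Hq.
  split; [repeat split |].
  - exact (sq_exp_map_flip_fixed x Hx Hq).
  - intros n; apply ex_derive_n_sq_exp_map.
  - eexists; apply is_derive_Derive_sq_exp_map_param.
  - exact (dfx_sq_exp_map_flip x Hx).
  - apply Rgt_not_eq, Qf_sq_exp_map_flip_pos, Hx.
  - rewrite dfxa_sq_exp_map_flip by exact Hx; lra.
  - exact (Qf_sq_exp_map_flip_pos x Hx).
Qed.

End SquareExpMap.

Lemma flip_point_gt_2 (k : R) : 2 < (k + 3 + sqrt (k ^ 2 - 2 * k + 9)) / 2.
Proof.
  assert (Hs2 : sqrt (k ^ 2 - 2 * k + 9) ^ 2 = (k - 1) ^ 2 + 8)
    by (rewrite pow2_sqrt; nra).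
  pose proof (sqrt_pos (k ^ 2 - 2 * k + 9)).
  assert (1 - k < sqrt (k ^ 2 - 2 * k + 9)) by nra.
  lra.
Qed.

Lemma flip_point_root (k : R) :
  let x0 := (k + 3 + sqrt (k ^ 2 - 2 * k + 9)) / 2 in (x0 - k) * (x0 - 2) = x0.
Proof.
  intros x0; unfold x0.
  assert (Hs2 : sqrt (k ^ 2 - 2 * k + 9) ^ 2 = k ^ 2 - 2 * k + 9)
    by (rewrite pow2_sqrt; nra).
  nra.
Qed.

Theorem theorem2p2 (k : R) (hk : 0 <= k) :
  let x0 := (k + 3 + sqrt (k ^ 2 - 2 * k + 9)) / 2 in
  let r0 := x0 - ln (x0 * (x0 - 2)) in
  supercritical_flip (fun x r => x ^ 2 * exp (r - x) + k) x0 r0.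
Proof.
  intros x0 r0.
  exact (supercritical_flip_sq_exp_map k x0 (flip_point_gt_2 k) (flip_point_root k)).
Qed.
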